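(* $$\limsup_{n\to\infty}\bigl(V(n+1)-V(n)\bigr)=+\infty \quad\text{and}\quad \liminf_{n\to\infty}\bigl(V(n+1)-V(n)\bigr)=-\infty.$$
   Context: For a positive integer $n$, an integer $a$ is called regular modulo $n$ if there exists an integer $x$ with $a^2x\equiv a \pmod n$. Let $V(n)$ denote the number of integers $a$ with $1\le a\le n$ that are regular modulo $n$. (Known fact: $V$ is multiplicative, $V(1)=1$, and $V(p^{\alpha})=p^{\alpha}-p^{\alpha-1}+1$ for a prime $p$ and $\alpha\ge1$.) *)

From mathcomp Require Import all_boot.
Set Implicit Arguments. Unset Strict Implicit. Unset Printing Implicit Defensive.

(* a is regular modulo n iff there is an integer x with a^2 x = a (mod n).
   Since x only matters modulo n, it suffices to search x in {0,..,n-1}. *)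
Definition regularb (n a : nat) : bool :=
  [exists x : 'I_n, a ^ 2 * x == a %[mod n]].

Definition V (n : nat) : nat :=
  \sum_(1 <= a < n.+1) regularb n a.

From mathcomp Require Import all_boot all_algebra cyclic zify.
Import GRing.Theory Num.Theory.

(* Two estimates on V suffice:
   - every a is regular modulo a squarefree m, hence V m = m (a is regular
     as soon as g = gcd(a, m) is coprime to m/g: then a^(phi(m/g)) = 1
     mod m/g by Euler, and x = a^(phi(m/g)-1) solves a^2 x = a mod m);
   - if 4 | m, no a = 2 (mod 4) is regular modulo m, hence V m <= 3m/4.
   Squarefree numbers m exist in both odd classes modulo 4 beyond any
   bound (take an odd prime p > 3 and either p or 3p).  For such m with
   m = 1 (mod 4) the difference V m - V (m-1) >= m - 3(m-1)/4 is huge,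
   and for m = 3 (mod 4) the difference V (m+1) - V m <= 3(m+1)/4 - m is
   hugely negative, which gives the limsup and the liminf. *)

Definition squarefree (m : nat) : Prop :=
  forall q, prime q -> ~~ (q * q %| m).

Lemma regular_of_coprime_cofactor (m a : nat) :
  0 < m -> coprime (gcdn a m) (m %/ gcdn a m) -> regularb m a.
Proof.
move=> m_gt0 cop.
set g := gcdn a m in cop *; set h := m %/ g in cop *.
have m_eq : m = h * g by rewrite /h divnK // dvdn_gcdr.
have h_gt0 : 0 < h by move: m_gt0; rewrite m_eq muln_gt0 => /andP[].
have cop_ah : coprime a h.
  have gcd_dvd_g : gcdn a h %| g.
    rewrite dvdn_gcd dvdn_gcdl /=.
    by apply: dvdn_trans (dvdn_gcdr a h) _; rewrite m_eq dvdn_mulr.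
  by rewrite /coprime -dvdn1 -(eqP cop) dvdn_gcd gcd_dvd_g dvdn_gcdr.
case: (posnP a) => [->|a_gt0].
  by apply/existsP; exists (Ordinal m_gt0); rewrite /= muln0.
set t := totient h.
have t_gt0 : 0 < t by rewrite totient_gt0.
have at_ge1 : 1 <= a ^ t by rewrite expn_gt0 a_gt0.
have h_dvd : h %| a ^ t - 1 by rewrite -eqn_mod_dvd // Euler_exp_totient.
apply/existsP; exists (Ordinal (ltn_pmod (a ^ t.-1) m_gt0)) => /=.
rewrite modnMmr.
have -> : a ^ 2 * a ^ t.-1 = a * a ^ t by rewrite -expnS -expnD; congr (_ ^ _); lia.
rewrite eqn_mod_dvd; last by rewrite -{1}(muln1 a) leq_mul2l at_ge1 orbT.
have -> : a * a ^ t - a = a * (a ^ t - 1) by rewrite mulnBr muln1.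
rewrite m_eq mulnC.
exact: dvdn_mul (dvdn_gcdl a m) h_dvd.
Qed.

Lemma squarefree_coprime_cofactor (m d : nat) :
  0 < m -> squarefree m -> d %| m -> coprime d (m %/ d).
Proof.
move=> m_gt0 sqf d_dvd; have d_gt0 : 0 < d by apply: dvdn_gt0 d_dvd.
rewrite /coprime; set g := gcdn d (m %/ d).
have g_gt0 : 0 < g by rewrite gcdn_gt0 d_gt0.
case: (ltngtP g 1) => //; first by rewrite ltnNge g_gt0.
move=> g_gt1; have /negP[] := sqf _ (pdiv_prime g_gt1).
rewrite -(divnK d_dvd) mulnC.
by apply: dvdn_mul; apply: dvdn_trans (pdiv_dvd g) _;
  [exact: dvdn_gcdl | exact: dvdn_gcdr].
Qed.

Lemma V_squarefree (m : nat) : 0 < m -> squarefree m -> V m = m.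
Proof.
move=> m_gt0 sqf; rewrite /V (eq_bigr (fun _ => 1)).
  by rewrite sum_nat_const_nat muln1 subn1.
move=> a _; rewrite regular_of_coprime_cofactor //.
by apply: squarefree_coprime_cofactor => //; exact: dvdn_gcdr.
Qed.

(* If 4 | m and a = 2 (mod 4), then 4 | a^2 x, so a^2 x = a (mod m) is
   impossible even modulo 4. *)
Lemma not_regular_2mod4 (m a : nat) : 4 %| m -> a %% 4 = 2 -> ~~ regularb m a.
Proof.
move=> four_dvd a_mod; apply/existsP => -[x /eqP congr_m].
have := congr1 (modn^~ 4) congr_m; rewrite !modn_dvdm // a_mod.
have four_dvd_lhs : 4 %| a ^ 2 * x.
  have /dvdnP[c ->] : 2 %| a by rewrite (divn_eq a 4) a_mod dvdn_add // dvdn_mull.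
  by apply: dvdn_mulr; rewrite expnMn dvdn_mull.
by move: four_dvd_lhs; rewrite /dvdn => /eqP ->.
Qed.

Lemma count_not_2mod4 (k : nat) :
  \sum_(1 <= a < (4 * k).+1) (a %% 4 != 2) = 3 * k.
Proof.
elim: k => [|k IH]; first by rewrite big_geq.
have shift j : (4 * k + j) %% 4 = j %% 4 by rewrite mulnC modnMDl.
rewrite mulnS add4n big_nat_recr // big_nat_recr // big_nat_recr //.
rewrite big_nat_recr //= IH.
by rewrite -addn1 -addn2 -addn3 -addn4 !shift /=; lia.
Qed.

Lemma V_mult4 (m : nat) : 4 %| m -> V m <= 3 * (m %/ 4).
Proof.
move=> four_dvd; rewrite /V -count_not_2mod4 mulnC divnK //.
apply: leq_sum => a _.
case: eqP => [a_mod|_]; last by case: regularb.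
by rewrite (negbTE (not_regular_2mod4 _ _ four_dvd a_mod)).
Qed.

(* A product of two distinct primes is squarefree: a prime r with
   r^2 | pq is p or q, and then p | q or q | p. *)
Lemma squarefree_prime_mul (p q : nat) :
  prime p -> prime q -> p != q -> squarefree (p * q).
Proof.
move=> p_pr q_pr p_neq_q r r_pr; apply/negP => r2_dvd.
have : r %| p * q by apply: dvdn_trans r2_dvd; apply: dvdn_mulr.
rewrite Euclid_dvdM // !dvdn_prime2 // => /orP[] /eqP r_eq; subst r.
  by rewrite dvdn_pmul2l ?prime_gt0 // dvdn_prime2 // (negbTE p_neq_q) in r2_dvd.
by rewrite mulnC dvdn_pmul2l ?prime_gt0 // dvdn_prime2 // eq_sym
  (negbTE p_neq_q) in r2_dvd.
Qed.

(* A prime is squarefree: q^2 | p forces q = p and then p^2 <= p. *)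
Lemma squarefree_prime (p : nat) : prime p -> squarefree p.
Proof.
move=> p_pr q q_pr; apply/negP => q2_dvd.
have : q %| p by apply: dvdn_trans q2_dvd; apply: dvdn_mulr.
rewrite dvdn_prime2 // => /eqP q_eq; subst q.
have := dvdn_leq (prime_gt0 p_pr) q2_dvd.
by have := prime_gt1 p_pr; nia.
Qed.

Lemma squarefree_in_odd_class (B r : nat) : r = 1 \/ r = 3 ->
  exists m, [/\ squarefree m, m %% 4 = r & B <= m].
Proof.
move=> r_odd; have [p p_big p_pr] := prime_above (B + 4).
have p_odd : odd p by case: (even_prime p_pr) => // p2; lia.
have [p_mod | p_mod] : p %% 4 = r \/ (3 * p) %% 4 = r.
  have p_mod2 : p %% 2 = 1 by rewrite modn2 p_odd.
  by case: r_odd => ->; lia.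
- by exists p; split => //; [exact: squarefree_prime | lia].
- exists (3 * p); split => //; last by lia.
  by apply: squarefree_prime_mul => //; apply/eqP; lia.
Qed.

Local Open Scope ring_scope.

Theorem proposition3 :
  (forall (M : int) (N : nat), exists n : nat, (N <= n)%N /\
      M <= (V n.+1)%:Z - (V n)%:Z) /\
  (forall (M : int) (N : nat), exists n : nat, (N <= n)%N /\
      (V n.+1)%:Z - (V n)%:Z <= M).
Proof.
split=> M N.
- (* m squarefree, m = 1 (mod 4): V m = m while V (m-1) <= 3(m-1)/4 *)
  have [m [m_sqf m_mod m_big]] :=
    squarefree_in_odd_class (4 * (absz M + N + 2)) 1 (or_introl erefl).
  exists m.-1; split; first lia.
  have four_dvd : (4 %| m.-1)%N by lia.
  have := V_mult4 _ four_dvd.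
  have -> : m.-1.+1 = m by lia.
  rewrite (V_squarefree m) //; lia.
- (* m squarefree, m = 3 (mod 4): V m = m while V (m+1) <= 3(m+1)/4 *)
  have [m [m_sqf m_mod m_big]] :=
    squarefree_in_odd_class (4 * (absz M + N + 2)) 3 (or_intror erefl).
  exists m; split; first lia.
  have four_dvd : (4 %| m.+1)%N by lia.
  have := V_mult4 _ four_dvd.
  rewrite (V_squarefree m) //; lia.
Qed.
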